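(* Let $f:\mathbb{R}^d\times\mathcal{X}\to\mathbb{R}$ be differentiable in $\theta$, where $\mathcal{X}$ is a subset of a Euclidean space with $\sup_{x\in\mathcal{X}}\Vert x\Vert\le D<\infty$ and $\sup_{x\in\mathcal{X}}\Vert\nabla f(0,x)\Vert\le E<\infty$. Assume (A1): there are $K_1,K_2>0$ with $\Vert\nabla f(\theta,x)-\nabla f(\hat\theta,\hat x)\Vert\le K_1\Vert\theta-\hat\theta\Vert+K_2\Vert x-\hat x\Vert(\Vert\theta\Vert+\Vert\hat\theta\Vert+1)$ for all $\theta,\hat\theta\in\mathbb{R}^d$, $x,\hat x\in\mathcal{X}$; (A2): there is $\mu>0$ with $\langle\nabla f(\theta_1,x)-\nabla f(\theta_2,x),\theta_1-\theta_2\rangle\ge\mu\Vert\theta_1-\theta_2\Vert^2$ for all $\theta_1,\theta_2\in\mathbb{R}^d$, $x\in\mathcal{X}$. Let $X_n=(x_1,\dots,x_n)$, $\hat X_n=(\hat x_1,\dots,\hat x_n)\in\mathcal{X}^n$ differ in at most one index, $b\in\{1,\dots,n\}$, $(\Omega_k)_{k\ge1}$ i.i.d. uniformly random $b$-subsets of $\{1,\dots,n\}$, and $$\theta_k=\theta_{k-1}-\tfrac\eta b\textstyle\sum_{i\in\Omega_k}\nabla f(\theta_{k-1},x_i),\qquad\hat\theta_k=\hat\theta_{k-1}-\tfrac\eta b\sum_{i\in\Omega_k}\nabla f(\hat\theta_{k-1},\hat x_i),$$ with $\theta_0=\hat\theta_0=\theta\in\mathbb{R}^d$. Assume $\eta<\min\left\{\frac1\mu,\frac{\mu}{K_1^2+64D^2K_2^2}\right\}$.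 Let $\nu_k,\hat\nu_k$ be the laws of $\theta_k,\hat\theta_k$. Then for all $k$, $$\mathcal{W}_1(\nu_k,\hat\nu_k)\le\frac{8DK_2\left(1-(1-\frac{\eta\mu}2)^k\right)}{n\mu}\left(\frac{2E}\mu+1\right)\max\left\{1+2\Vert\theta\Vert^2+\frac{2E^2}{\mu^2},\ 2-\frac\eta\mu K_1^2-\frac{56\eta}{\mu}D^2K_2^2+\frac{64\eta}{\mu^3}D^2K_2^2E^2\right\}.$$
   Context: $\mathcal{W}_1$ is the 1-Wasserstein distance between probability measures on $\mathbb{R}^d$. *)

From HB Require Import structures.
From mathcomp Require Import all_boot all_order all_algebra.
From mathcomp Require Import all_classical all_reals all_analysis.
Set Implicit Arguments. Unset Strict Implicit. Unset Printing Implicit Defensive.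
Import Order.TTheory GRing.Theory Num.Theory.
Import numFieldNormedType.Exports.
Local Open Scope classical_set_scope.
Local Open Scope ring_scope.

Definition edot (R : realType) (d : nat) (u v : 'rV[R]_d) : R :=
  \sum_(i < d) u 0 i * v 0 i.
Definition enorm (R : realType) (d : nat) (u : 'rV[R]_d) : R :=
  Num.sqrt (edot u u).

Definition grad (R : realType) (d m : nat)
  (f : 'rV[R]_d -> 'rV[R]_m -> R) (theta : 'rV[R]_d) (x : 'rV[R]_m) : 'rV[R]_d :=
  \row_(i < d) ('D_(delta_mx 0 i) (f ^~ x) theta).

Definition bsub (n b : nat) := {A : {set 'I_n} | #|A| == b}.

Definition sgd_step (R : realType) (d m n : nat)
  (f : 'rV[R]_d -> 'rV[R]_m -> R) (xs : 'I_n -> 'rV[R]_m) (eta : R) (b : nat)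
  (theta : 'rV[R]_d) (A : {set 'I_n}) : 'rV[R]_d :=
  theta - (eta / b%:R) *: \sum_(i in A) grad f theta (xs i).

(* theta_k as a function of the batches (Omega_1, ..., Omega_k) *)
Definition sgd_iter (R : realType) (d m n b k : nat)
  (f : 'rV[R]_d -> 'rV[R]_m -> R) (xs : 'I_n -> 'rV[R]_m) (eta : R)
  (theta0 : 'rV[R]_d) (om : k.-tuple (bsub n b)) : 'rV[R]_d :=
  foldl (fun th (A : bsub n b) => sgd_step f xs eta b th (val A)) theta0 om.

(* Finitely supported probability laws on R^d as weighted atom lists *)
Definition dlaw (R : realType) (d : nat) := seq ('rV[R]_d * R).
Definition mass (R : realType) (d : nat) (mu : dlaw R d) (x : 'rV[R]_d) : R :=
  \sum_(a <- mu | a.1 == x) a.2.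

Definition unif_law (R : realType) (d : nat) (S : finType) (F : S -> 'rV[R]_d)
  : dlaw R d := [seq (F w, #|S|%:R^-1) | w <- enum S].

(* couplings of two finitely supported laws (every coupling of finitely
   supported measures is finitely supported, on supp mu x supp nu) *)
Definition is_coupling (R : realType) (d : nat) (mu nu : dlaw R d)
  (pi : seq (('rV[R]_d * 'rV[R]_d) * R)) : Prop :=
  [/\ forall a, a \in pi -> 0 <= a.2,
      forall x, \sum_(a <- pi | a.1.1 == x) a.2 = mass mu x &
      forall y, \sum_(a <- pi | a.1.2 == y) a.2 = mass nu y].

Definition W1 (R : realType) (d : nat) (mu nu : dlaw R d) : R :=
  inf [set c : R | exists pi, is_coupling mu nu pi /\
        c = \sum_(a <- pi) a.2 * enorm (a.1.1 - a.1.2)].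

From HB Require Import structures.
From mathcomp Require Import all_boot all_order all_algebra.
From mathcomp Require Import all_classical all_reals all_analysis.
From mathcomp Require Import ring lra perm.
Import Order.TTheory GRing.Theory Num.Theory.
Import numFieldNormedType.Exports.
Local Open Scope classical_set_scope.
Local Open Scope ring_scope.

(* Run both chains on the same batches; the diagonal coupling bounds W1 by the
   mean distance of the coupled iterates.  By (A1) and (A2), one step on the
   same data is a (1 - eta mu / 2)-contraction, and it maps the ball of radius
   M = |theta| + 2E/mu into itself.  The data sets differ only at the index j,
   which lies in a uniform b-batch with probability b/n and then moves the step
   by at most (eta / b) 2 D K2 (2 M + 1).  Averaging the recursion
   d' <= (1 - eta mu / 2) d + c over all batch sequences and summing the
   geometric series gives the bound; only the first term of the max is needed. *)

Set Implicit Arguments. Unset Strict Implicit. Unset Printing Implicit Defensive.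

Section Euclidean.
Variables (R : realType) (d : nat).
Implicit Types (u v w : 'rV[R]_d) (a c : R).

Lemma edotC u v : edot u v = edot v u.
Proof. by apply: eq_bigr => i _; rewrite mulrC. Qed.

Lemma edotDl u v w : edot (u + v) w = edot u w + edot v w.
Proof. by rewrite /edot -big_split; apply: eq_bigr => i _; rewrite mxE mulrDl. Qed.

Lemma edotZl a u w : edot (a *: u) w = a * edot u w.
Proof. by rewrite /edot mulr_sumr; apply: eq_bigr => i _; rewrite mxE mulrA. Qed.

Lemma edotNl u w : edot (- u) w = - edot u w.
Proof. by rewrite -scaleN1r edotZl mulN1r. Qed.

Lemma edotBl u v w : edot (u - v) w = edot u w - edot v w.
Proof. by rewrite edotDl edotNl. Qed.

Lemma edotDr u v w : edot w (u + v) = edot w u + edot w v.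
Proof. by rewrite edotC edotDl !(edotC w). Qed.

Lemma edotZr a u w : edot w (a *: u) = a * edot w u.
Proof. by rewrite edotC edotZl edotC. Qed.

Lemma edotBr u v w : edot w (u - v) = edot w u - edot w v.
Proof. by rewrite edotC edotBl !(edotC w). Qed.

Lemma edot0l w : edot 0 w = 0.
Proof. by rewrite -(scale0r 0) edotZl mul0r. Qed.

Lemma edot0r w : edot w 0 = 0.
Proof. by rewrite edotC edot0l. Qed.

Lemma edot_suml (I : finType) (P : pred I) (F : I -> 'rV[R]_d) w :
  edot (\sum_(i | P i) F i) w = \sum_(i | P i) edot (F i) w.
Proof.
rewrite /edot exchange_big /=; apply: eq_bigr => k _.
by rewrite summxE mulr_suml.
Qed.

Lemma edot_ge0 u : 0 <= edot u u.
Proof. by apply: sumr_ge0 => i _; rewrite -expr2 sqr_ge0. Qed.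

Lemma enorm_ge0 u : 0 <= enorm u.
Proof. exact: sqrtr_ge0. Qed.

Lemma sqr_enorm u : enorm u ^+ 2 = edot u u.
Proof. by rewrite /enorm sqr_sqrtr // edot_ge0. Qed.

Lemma enorm_le_of_edot u c : 0 <= c -> edot u u <= c ^+ 2 -> enorm u <= c.
Proof.
move=> c0 uc; rewrite -(ger0_norm c0) -sqrtr_sqr.
by rewrite /enorm ler_sqrt ?sqr_ge0.
Qed.

Lemma enorm_eq0 u : (enorm u == 0) = (u == 0).
Proof.
rewrite /enorm sqrtr_eq0; apply/idP/eqP => [u0|->]; last by rewrite edot0l.
have /psumr_eq0P u2_0 : edot u u = 0 by apply/eqP; rewrite eq_le u0 edot_ge0.
apply/rowP => i; rewrite mxE; apply/eqP; rewrite -sqrf_eq0 expr2.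
by apply/eqP; apply: u2_0 => // k _; rewrite -expr2 sqr_ge0.
Qed.

Lemma edot_le_enorm u v : edot u v <= enorm u * enorm v.
Proof.
have [|uv0] := eqVneq (enorm u * enorm v) 0.
  move/eqP; rewrite mulf_eq0 !enorm_eq0 => /orP[]/eqP->;
  by rewrite ?edot0l ?edot0r mulr_ge0 ?enorm_ge0.
have uv_gt0 : 0 < enorm u * enorm v by rewrite lt0r uv0 mulr_ge0 ?enorm_ge0.
(* |v| u - |u| v has squared norm 2 |u| |v| (|u| |v| - <u, v>). *)
have := edot_ge0 (enorm v *: u - enorm u *: v).
rewrite edotBl !edotBr !edotZl !edotZr (edotC v u) -!sqr_enorm.
nra.
Qed.

Lemma enormZ a u : enorm (a *: u) = `|a| * enorm u.
Proof.
by rewrite /enorm edotZl edotZr mulrA -expr2 sqrtrM ?sqr_ge0 // sqrtr_sqr.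
Qed.

Lemma enormN u : enorm (- u) = enorm u.
Proof. by rewrite -scaleN1r enormZ normrN1 mul1r. Qed.

Lemma enorm_distC u v : enorm (u - v) = enorm (v - u).
Proof. by rewrite -enormN opprB. Qed.

Lemma enorm0 : enorm (0 : 'rV[R]_d) = 0.
Proof. by rewrite /enorm edot0l sqrtr0. Qed.

Lemma ler_enormD u v : enorm (u + v) <= enorm u + enorm v.
Proof.
apply: enorm_le_of_edot; first by rewrite addr_ge0 ?enorm_ge0.
rewrite edotDl !edotDr (edotC v u) sqrrD -!sqr_enorm.
by have := edot_le_enorm u v; lra.
Qed.

Lemma ler_enormB u v : enorm (u - v) <= enorm u + enorm v.
Proof. by rewrite -(enormN v) ler_enormD. Qed.

Lemma ler_enorm_sum (I : finType) (P : pred I) (F : I -> 'rV[R]_d) :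
  enorm (\sum_(i | P i) F i) <= \sum_(i | P i) enorm (F i).
Proof.
elim/big_rec2: _ => [|i y x _ h]; first by rewrite enorm0.
by apply: le_trans (ler_enormD _ _) _; rewrite lerD2l.
Qed.

End Euclidean.

Lemma descent_step_contract (R : realType) (d : nat) (mu K eta : R)
    (del G : 'rV[R]_d) :
  0 <= eta -> eta * mu <= 1 -> eta * K ^+ 2 <= mu ->
  mu * enorm del ^+ 2 <= edot G del -> enorm G <= K * enorm del ->
  enorm (del - eta *: G) <= (1 - eta * mu / 2) * enorm del.
Proof.
move=> eta0 eta_mu eta_K hmono hlip.
(* |del - eta G|^2 <= (1 - 2 eta mu + eta mu) |del|^2
                    <= (1 - eta mu / 2)^2 |del|^2 *)
apply: enorm_le_of_edot; first by rewrite mulr_ge0 ?enorm_ge0 //; lra.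
rewrite edotBl !edotBr !edotZl !edotZr (edotC del G) -!sqr_enorm.
have hG2 : eta ^+ 2 * enorm G ^+ 2 <= eta * mu * enorm del ^+ 2.
  have G0 := enorm_ge0 G.
  have GK : enorm G ^+ 2 <= K ^+ 2 * enorm del ^+ 2.
    by rewrite -exprMn ler_sqr ?nnegrE ?(le_trans G0).
  have := ler_wpM2l (sqr_ge0 eta) GK.
  have := ler_wpM2r (sqr_ge0 (enorm del)) (ler_wpM2l eta0 eta_K).
  lra.
have : eta * mu * enorm del ^+ 2 <= eta * edot G del by rewrite -mulrA ler_wpM2l.
have : 0 <= (eta * mu / 2) ^+ 2 * enorm del ^+ 2 by rewrite mulr_ge0 ?sqr_ge0.
rewrite exprMn; nra.
Qed.

Section BatchMean.
Variables (R : realType) (d : nat) (I : finType).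
Implicit Types (A : {set I}) (F G : I -> 'rV[R]_d).

Definition batch_mean A F : 'rV[R]_d := #|A|%:R^-1 *: \sum_(i in A) F i.

Lemma batch_meanB A F G :
  batch_mean A F - batch_mean A G = batch_mean A (fun i => F i - G i).
Proof. by rewrite /batch_mean -scalerBr -sumrB. Qed.

Lemma mean_const A (c : R) :
  (0 < #|A|)%N -> #|A|%:R^-1 * \sum_(i in A) c = c.
Proof.
by move=> A0; rewrite sumr_const -[c *+ _]mulr_natl mulKf // pnatr_eq0 -lt0n.
Qed.

Lemma edot_batch_mean_ge A F w c : (0 < #|A|)%N ->
  (forall i, i \in A -> c <= edot (F i) w) -> c <= edot (batch_mean A F) w.
Proof.
move=> A0 hF; rewrite edotZl edot_suml -{1}(mean_const c A0).
by rewrite ler_wpM2l ?invr_ge0 // ler_sum.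
Qed.

Lemma enorm_batch_mean_le A F c : (0 < #|A|)%N ->
  (forall i, i \in A -> enorm (F i) <= c) -> enorm (batch_mean A F) <= c.
Proof.
move=> A0 hF; rewrite enormZ ger0_norm ?invr_ge0 // -(mean_const c A0).
by rewrite ler_wpM2l ?invr_ge0 // (le_trans (ler_enorm_sum _ _)) ?ler_sum.
Qed.

End BatchMean.

Lemma sumrB_agree_except (V : zmodType) (I : finType) (A : {set I}) (j : I)
    (F G : I -> V) :
  (forall i, i != j -> F i = G i) ->
  \sum_(i in A) (F i - G i) = (F j - G j) *+ (j \in A).
Proof.
move=> FG; have [jA|jA] := boolP (j \in A).
  rewrite (bigD1 j) //= big1 ?addr0 // => i /andP[_ ij].
  by rewrite FG ?subrr.
by rewrite big1 // => i iA; rewrite FG ?subrr //; apply: contraNneq jA => <-.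
Qed.

Lemma big_tupleS (V : nmodType) (T : finType) k (F : k.+1.-tuple T -> V) :
  \sum_(t : k.+1.-tuple T) F t =
  \sum_(A : T) \sum_(t : k.-tuple T) F [tuple of A :: t].
Proof.
rewrite pair_big /=.
rewrite (reindex (fun p : T * k.-tuple T => [tuple of p.1 :: p.2])) //=.
exists (fun t : k.+1.-tuple T => (thead t, [tuple of behead t])).
  by case=> A t _ /=; congr pair; apply: val_inj.
by move=> t _; case/tupleP: t => A t /=; apply: val_inj.
Qed.

Section CoupledIteration.
Variables (R : numDomainType) (T : finType) (V : Type).
Variables (dist : V -> V -> R) (B : V -> Prop) (st st' : V -> T -> V).
Variables (c : T -> R) (q a : R).
Hypothesis q_ge0 : 0 <= q.
Hypothesis stB : forall u A, B u -> B (st u A).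
Hypothesis st'B : forall v A, B v -> B (st' v A).
Hypothesis st_dist : forall u v A, B u -> B v ->
  dist (st u A) (st' v A) <= q * dist u v + c A.
Hypothesis c_sum : \sum_A c A <= #|T|%:R * a.

Lemma sum_tuple_foldl_dist_le k u v : B u -> B v ->
  \sum_(t : k.-tuple T) dist (foldl st u t) (foldl st' v t) <=
    #|T|%:R ^+ k * (q ^+ k * dist u v + a * \sum_(i < k) q ^+ i).
Proof.
elim: k u v => [|k IH] u v Bu Bv.
  rewrite (eq_bigr (fun=> dist u v)) => [|t _]; last by rewrite (tuple0 t).
  by rewrite sumr_const card_tuple big_ord0 !expr0 mulr0 addr0 !mul1r.
set N := #|T|%:R; set S := \sum_(i < k) q ^+ i.
have qk0 : 0 <= q ^+ k := exprn_ge0 k q_ge0.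
rewrite big_tupleS /=.
apply: le_trans (ler_sum _ (fun A _ => IH _ _ (stB A Bu) (st'B A Bv))) _.
rewrite -mulr_sumr exprSr -mulrA ler_wpM2l ?exprn_ge0 ?ler0n //.
apply: le_trans (_ : \sum_A (q ^+ k * (q * dist u v + c A) + a * S) <= _).
  by apply: ler_sum => A _; rewrite lerD2r ler_wpM2l ?st_dist.
rewrite big_split /= -mulr_sumr big_split /= !sumr_const -/N big_ord_recr /= -/S.
rewrite -[q * _ *+ _]mulr_natr -[a * S *+ _]mulr_natr (_ : #|_|%:R = N) // exprSr.
rewrite [leRHS](_ : _ = q ^+ k * (q * dist u v * N + N * a) + a * S * N).
  by rewrite lerD2r ler_wpM2l // lerD2l.
by ring.
Qed.
End CoupledIteration.

Lemma W1_unif_law_le (R : realType) (d : nat) (S : finType)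
    (F G : S -> 'rV[R]_d) :
  W1 (unif_law F) (unif_law G) <= #|S|%:R^-1 * \sum_w enorm (F w - G w).
Proof.
have W_lb : has_lbound [set c : R | exists pi,
    is_coupling (unif_law F) (unif_law G) pi /\
    c = \sum_(a <- pi) a.2 * enorm (a.1.1 - a.1.2)].
  exists 0 => _ [pi [[pi_ge0 _ _] ->]].
  by rewrite big_seq sumr_ge0 // => a /pi_ge0 a0; rewrite mulr_ge0 ?enorm_ge0.
apply: (ge_inf W_lb).
exists [seq ((F w, G w), #|S|%:R^-1) | w <- enum S]; split.
  split=> [a /mapP[w _ ->]|x|y]; rewrite ?invr_ge0 ?ler0n //.
    by rewrite /mass /unif_law !big_map.
  by rewrite /mass /unif_law !big_map.
by rewrite big_map mulr_sumr big_enum.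
Qed.

Section BatchCount.
Variables (n b : nat).

Definition bsub_tperm (i j : 'I_n) (A : bsub n b) : bsub n b :=
  exist _ (tperm i j @: val A)
    (etrans (congr1 (eqn^~ b) (card_imset _ (@perm_inj _ (tperm i j)))) (valP A)).

Lemma bsub_tpermK i j : involutive (bsub_tperm i j).
Proof.
move=> A; apply: val_inj; rewrite /= -imset_comp -[RHS]imset_id.
by apply: eq_imset => x /=; rewrite tpermK.
Qed.

Lemma mem_bsub_tperm i j A : (i \in val (bsub_tperm i j A)) = (j \in val A).
Proof. by rewrite /= -{1}(tpermR i j) mem_imset //; apply: perm_inj. Qed.

Lemma count_bsub_mem (R : pzSemiRingType) (j : 'I_n) :
  n%:R * \sum_(A : bsub n b) (j \in val A)%:R = b%:R * #|{: bsub n b}|%:R :> R.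
Proof.
have same_count i :
    \sum_(A : bsub n b) (i \in val A)%:R = \sum_(A : bsub n b) (j \in val A)%:R :> R.
  rewrite (reindex (bsub_tperm i j)) /=; last first.
    by exists (bsub_tperm i j) => A _; rewrite bsub_tpermK.
  by apply: eq_bigr => A _; rewrite mem_bsub_tperm.
have batch_size (A : bsub n b) : \sum_(i < n) (i \in val A)%:R = b%:R :> R.
  rewrite (eq_bigr (fun i => if i \in val A then 1 else 0)) => [|i _]; last first.
    by case: (i \in _).
  by rewrite -big_mkcond sumr_const (eqP (valP A)).
transitivity (\sum_(i < n) \sum_(A : bsub n b) (i \in val A)%:R : R).
  by under [RHS]eq_bigr do rewrite same_count; rewrite sumr_const card_ord mulr_natl.
rewrite exchange_big /=; under eq_bigr do rewrite batch_size.
by rewrite sumr_const mulr_natr.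
Qed.

End BatchCount.

Section MinibatchSGD.
Variables (R : realType) (d m n b : nat) (f : 'rV[R]_d -> 'rV[R]_m -> R).
Variables (X : set 'rV[R]_m) (K mu eta : R).
Hypothesis grad_lipschitz : forall th th' x, X x ->
  enorm (grad f th x - grad f th' x) <= K * enorm (th - th').
Hypothesis grad_strongly_monotone : forall th th' x, X x ->
  mu * enorm (th - th') ^+ 2 <= edot (grad f th x - grad f th' x) (th - th').
Hypotheses (eta_ge0 : 0 <= eta) (eta_mu : eta * mu <= 1).
Hypothesis eta_K : eta * K ^+ 2 <= mu.
Hypothesis b_gt0 : (0 < b)%N.

Local Notation step xs u A := (sgd_step f xs eta b u (val (A : bsub n b))).
Local Notation q := (1 - eta * mu / 2).

Lemma step_factor_ge0 : 0 <= q.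
Proof. by move: eta_mu; lra. Qed.

Lemma sgd_stepE xs (A : bsub n b) u :
  step xs u A = u - eta *: batch_mean (val A) (fun i => grad f u (xs i)).
Proof. by rewrite /sgd_step /batch_mean (eqP (valP A)) scalerA. Qed.

Lemma sgd_step_contract xs (A : bsub n b) u v : (forall i, X (xs i)) ->
  enorm (step xs u A - step xs v A) <= q * enorm (u - v).
Proof.
move=> hxs; have A0 : (0 < #|val A|)%N by rewrite (eqP (valP A)).
rewrite !sgd_stepE.
have -> : forall a c : 'rV[R]_d,
    u - eta *: a - (v - eta *: c) = u - v - eta *: (a - c).
  by move=> a c; apply/rowP => i; rewrite !mxE; ring.
rewrite batch_meanB.
apply: (descent_step_contract _ _ eta_K) => //.
  by apply: edot_batch_mean_ge => // i _; apply: grad_strongly_monotone.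
by apply: enorm_batch_mean_le => // i _; apply: grad_lipschitz.
Qed.

Lemma sgd_step_in_ball xs (A : bsub n b) (E M : R) u : (forall i, X (xs i)) ->
  (forall i, enorm (grad f 0 (xs i)) <= E) -> 2 * E <= mu * M ->
  enorm u <= M -> enorm (step xs u A) <= M.
Proof.
move=> hxs hE EM uM; have A0 : (0 < #|val A|)%N by rewrite (eqP (valP A)).
have step0 : enorm (step xs 0 A) <= eta * E.
  rewrite sgd_stepE sub0r enormN enormZ ger0_norm //.
  by apply: ler_wpM2l => //; apply: enorm_batch_mean_le.
have := sgd_step_contract A u 0 hxs; rewrite subr0 => hcontr.
rewrite -(subrK (step xs 0 A) (step xs u A)).
apply: le_trans (ler_enormD _ _) (le_trans (lerD hcontr step0) _).
have : q * enorm u <= q * M by apply: ler_wpM2l => //; apply: step_factor_ge0.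
have : eta * (2 * E) <= eta * (mu * M) by apply: ler_wpM2l.
lra.
Qed.

Lemma sgd_step_perturb_le xs xs' (j : 'I_n) (A : bsub n b) u v :
  (forall i, X (xs i)) -> (forall i, i != j -> xs i = xs' i) ->
  enorm (step xs u A - step xs' v A) <=
    q * enorm (u - v) +
    (j \in val A)%:R * (eta / b%:R * enorm (grad f v (xs j) - grad f v (xs' j))).
Proof.
move=> hxs hj.
rewrite -(subrK (step xs v A) (step xs u A)) -addrA.
apply: le_trans (ler_enormD _ _) (lerD (sgd_step_contract _ _ _ hxs) _).
rewrite /sgd_step opprB addrC addrA subrK -scalerBr -sumrB.
rewrite (@sumrB_agree_except _ _ _ j (fun i => grad f v (xs' i))); last first.
  by move=> i /hj ->.
rewrite enormZ ger0_norm ?divr_ge0 // enorm_distC.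
by case: (j \in val A); rewrite ?mul1r ?mul0r ?enorm0 ?mulr0.
Qed.

Variables (xs xs' : 'I_n -> 'rV[R]_m) (j : 'I_n) (E M C : R).
Hypotheses (xs_in : forall i, X (xs i)) (xs'_in : forall i, X (xs' i)).
Hypothesis xs_xs' : forall i, i != j -> xs i = xs' i.
Hypotheses (grad0_xs : forall i, enorm (grad f 0 (xs i)) <= E)
  (grad0_xs' : forall i, enorm (grad f 0 (xs' i)) <= E).
Hypothesis E_M : 2 * E <= mu * M.
Hypothesis grad_xs_xs' : forall v, enorm v <= M ->
  enorm (grad f v (xs j) - grad f v (xs' j)) <= C.
Hypothesis b_le_n : (b <= n)%N.

Lemma sgd_W1_le theta k : enorm theta <= M ->
  W1 (unif_law (@sgd_iter R d m n b k f xs eta theta))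
     (unif_law (@sgd_iter R d m n b k f xs' eta theta)) <=
  eta * C / n%:R * \sum_(i < k) q ^+ i.
Proof.
move=> thetaM.
have n_gt0 : (0 < n)%N := leq_trans b_gt0 b_le_n.
have C_ge0 : 0 <= C := le_trans (enorm_ge0 _) (grad_xs_xs' thetaM).
pose c (A : bsub n b) := (j \in val A)%:R * (eta / b%:R * C).
have coupled u v (A : bsub n b) : enorm u <= M -> enorm v <= M ->
    enorm (step xs u A - step xs' v A) <= q * enorm (u - v) + c A.
  move=> _ vM; apply: le_trans (sgd_step_perturb_le A u v xs_in xs_xs') _.
  rewrite lerD2l; apply: ler_wpM2l; first exact: ler0n.
  by apply: ler_wpM2l; [rewrite divr_ge0 ?ler0n | exact: grad_xs_xs'].
have c_sum : \sum_A c A <= #|{: bsub n b}|%:R * (eta * C / n%:R).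
  have n_neq0 : n%:R != 0 :> R by rewrite pnatr_eq0 -lt0n.
  rewrite le_eqVlt -(inj_eq (mulfI n_neq0)) -mulr_suml (mulrA n%:R).
  rewrite count_bsub_mem.
  by apply/orP; left; apply/eqP; field; rewrite n_neq0 pnatr_eq0 -lt0n b_gt0.
have := sum_tuple_foldl_dist_le step_factor_ge0
  (fun u A => sgd_step_in_ball A xs_in grad0_xs E_M)
  (fun u A => sgd_step_in_ball A xs'_in grad0_xs' E_M)
  coupled c_sum k thetaM thetaM.
rewrite subrr enorm0 mulr0 add0r => sum_le.
apply: le_trans (W1_unif_law_le _ _) _.
have aS_ge0 : 0 <= eta * C / n%:R * \sum_(i < k) q ^+ i.
  rewrite !mulr_ge0 ?invr_ge0 ?ler0n ?sumr_ge0 // => i _.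
  by rewrite exprn_ge0 ?step_factor_ge0.
rewrite card_tuple natrX.
(* The number of batch sequences is positive, but the zero case is harmless:
   there the left-hand side is [0^-1 * _ = 0]. *)
have := exprn_ge0 k (ler0n R #|{: bsub n b}|); rewrite le0r => /orP[/eqP->|Nk_gt0].
  by rewrite invr0 mul0r.
by rewrite ler_pdivrMl.
Qed.

End MinibatchSGD.

Lemma step_size_bounds (R : realFieldType) (mu K c eta : R) :
  0 < mu -> 0 <= c -> 0 < eta -> eta < Num.min mu^-1 (mu / (K ^+ 2 + c)) ->
  eta * mu <= 1 /\ eta * K ^+ 2 <= mu.
Proof.
move=> mu_gt0 c_ge0 eta_gt0; rewrite lt_min => /andP[eta_mu eta_K].
split; first by move: eta_mu; rewrite -(ltr_pM2r mu_gt0) mulVf ?gt_eqF // => /ltW.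
have : 0 <= K ^+ 2 + c by rewrite addr_ge0 ?sqr_ge0.
rewrite le0r => /orP[/eqP Kc0|Kc_gt0].
  by move: eta_K; rewrite Kc0 invr0 mulr0; lra.
move: eta_K; rewrite ltr_pdivlMr // => eta_K.
have : eta * K ^+ 2 <= eta * (K ^+ 2 + c).
  by apply: ler_wpM2l; [exact: ltW | rewrite lerDl].
lra.
Qed.

Lemma grad_data_diff_le (R : realType) (d m : nat)
    (g : 'rV[R]_d -> 'rV[R]_m -> 'rV[R]_d) (X : set 'rV[R]_m) (D K1 K2 M : R) :
  0 < K2 -> (forall x, X x -> enorm x <= D) ->
  (forall th th' x x', X x -> X x' ->
     enorm (g th x - g th' x') <=
       K1 * enorm (th - th') + K2 * enorm (x - x') * (enorm th + enorm th' + 1)) ->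
  forall v x x', X x -> X x' -> enorm v <= M ->
  enorm (g v x - g v x') <= 2 * D * K2 * (2 * M + 1).
Proof.
move=> K2_gt0 hD hA1 v x x' Xx Xx' vM.
apply: le_trans (hA1 v v x x' Xx Xx') _; rewrite subrr enorm0 mulr0 add0r.
have xx' : enorm (x - x') <= 2 * D.
  by have := ler_enormB x x'; have := hD x Xx; have := hD x' Xx'; lra.
rewrite [leRHS](_ : _ = K2 * (2 * D * (2 * M + 1))); last by ring.
rewrite -mulrA ler_pM2l //; apply: ler_pM; rewrite ?enorm_ge0 //.
  by rewrite !addr_ge0 ?enorm_ge0.
by rewrite lerD2r mulr_natl mulr2n; apply: lerD.
Qed.

Lemma sgd_rate_le (R : realFieldType) (eta mu D K2 E t x : R) (n k : nat) :
  0 < eta -> 0 < mu -> eta * mu <= 1 -> 0 <= D -> 0 <= K2 -> 0 <= E -> 0 <= t ->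
  (0 < n)%N -> 1 + 2 * t ^+ 2 + 2 * E ^+ 2 / mu ^+ 2 <= x ->
  eta * (2 * D * K2 * (2 * (t + 2 * (E / mu)) + 1)) / n%:R *
    \sum_(i < k) (1 - eta * mu / 2) ^+ i <=
  8 * D * K2 * (1 - (1 - eta * mu / 2) ^+ k) / (n%:R * mu) * (2 * E / mu + 1) * x.
Proof.
move=> eta_gt0 mu_gt0 eta_mu D_ge0 K2_ge0 E_ge0 t_ge0 n_gt0 x_ge.
set e := E / mu; set S := \sum_(i < k) _.
rewrite -mulrA -expr_div_n -/e in x_ge.
have e_ge0 : 0 <= e by rewrite divr_ge0 // ltW.
have n_neq0 : n%:R != 0 :> R by rewrite pnatr_eq0 -lt0n.
have S_ge0 : 0 <= S by apply: sumr_ge0 => i _; apply: exprn_ge0; lra.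
have geo : 1 - (1 - eta * mu / 2) ^+ k = eta * mu / 2 * S.
  by rewrite -opprB subrX1 -/S; ring.
set F := 2 * D * K2 * eta * S / n%:R.
have F_ge0 : 0 <= F by rewrite /F !mulr_ge0 ?invr_ge0 ?ler0n // ltW.
rewrite geo (_ : eta * _ / n%:R * S = F * (2 * (t + 2 * e) + 1)); last first.
  by rewrite /F; field.
rewrite (_ : _ * x = F * (2 * (2 * e + 1) * x)); last first.
  by rewrite /F /e; field; rewrite n_neq0 gt_eqF.
apply: (ler_wpM2l F_ge0).
have : (2 * e + 1) * (1 + 2 * t ^+ 2 + 2 * e ^+ 2) <= (2 * e + 1) * x.
  by apply: ler_wpM2l => //; lra.
have := sqr_ge0 (2 * t - 1 / 2); have := sqr_ge0 e.
have : 0 <= e * (2 * t ^+ 2 + 2 * e ^+ 2).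
  by apply: mulr_ge0 => //; apply: addr_ge0; apply: mulr_ge0; rewrite ?sqr_ge0.
nra.
Qed.

Unset Implicit Arguments. Set Strict Implicit.

Theorem theorem3p2 (R : realType) (d m : nat)
  (f : 'rV[R]_d -> 'rV[R]_m -> R) (X : set 'rV[R]_m)
  (D E K1 K2 mu : R)
  (hdiff : forall x, X x -> forall th, differentiable (f ^~ x) th)
  (hD : forall x, X x -> enorm x <= D)
  (hE : forall x, X x -> enorm (grad f 0 x) <= E)
  (hK1 : 0 < K1) (hK2 : 0 < K2)
  (hA1 : forall th th' x x', X x -> X x' ->
     enorm (grad f th x - grad f th' x') <=
       K1 * enorm (th - th') + K2 * enorm (x - x') * (enorm th + enorm th' + 1))
  (hmu : 0 < mu)
  (hA2 : forall th1 th2 x, X x ->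
     mu * enorm (th1 - th2) ^+ 2 <= edot (grad f th1 x - grad f th2 x) (th1 - th2))
  (n b : nat) (xs xs' : 'I_n -> 'rV[R]_m)
  (hxs : forall i, X (xs i)) (hxs' : forall i, X (xs' i))
  (hdiffer : exists j : 'I_n, forall i, i != j -> xs i = xs' i)
  (hb : (1 <= b <= n)%N)
  (eta : R) (heta0 : 0 < eta)
  (heta : eta < Num.min mu^-1 (mu / (K1 ^+ 2 + 64 * D ^+ 2 * K2 ^+ 2)))
  (theta : 'rV[R]_d) (k : nat) :
  W1 (unif_law (@sgd_iter R d m n b k f xs eta theta))
     (unif_law (@sgd_iter R d m n b k f xs' eta theta)) <=
  8 * D * K2 * (1 - (1 - eta * mu / 2) ^+ k) / (n%:R * mu)
  * (2 * E / mu + 1)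
  * Num.max (1 + 2 * enorm theta ^+ 2 + 2 * E ^+ 2 / mu ^+ 2)
            (2 - eta / mu * K1 ^+ 2 - 56 * eta / mu * D ^+ 2 * K2 ^+ 2
               + 64 * eta / mu ^+ 3 * D ^+ 2 * K2 ^+ 2 * E ^+ 2).
Proof.
have [j xs_xs'] := hdiffer; have /andP[b_gt0 b_le_n] := hb.
have c_ge0 : 0 <= 64 * D ^+ 2 * K2 ^+ 2.
  by apply: mulr_ge0; [apply: mulr_ge0 |]; rewrite ?sqr_ge0.
have [eta_mu eta_K] := step_size_bounds hmu c_ge0 heta0 heta.
have lip th th' x :
    X x -> enorm (grad f th x - grad f th' x) <= K1 * enorm (th - th').
  move=> Xx; have := hA1 th th' x x Xx Xx.
  by rewrite subrr enorm0 mulr0 mul0r addr0.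
have D_ge0 : 0 <= D := le_trans (enorm_ge0 _) (hD _ (hxs j)).
have E_ge0 : 0 <= E := le_trans (enorm_ge0 _) (hE _ (hxs j)).
set M := enorm theta + 2 * (E / mu).
have E_M : 2 * E <= mu * M.
  have -> : mu * M = mu * enorm theta + 2 * E.
    by rewrite /M; field; rewrite gt_eqF.
  by rewrite lerDr mulr_ge0 ?enorm_ge0 // ltW.
apply: le_trans (sgd_W1_le lip hA2 (ltW heta0) eta_mu eta_K b_gt0 hxs hxs' xs_xs'
  (fun i => hE _ (hxs i)) (fun i => hE _ (hxs' i)) E_M
  (fun v => grad_data_diff_le hK2 hD hA1 (hxs j) (hxs' j)) b_le_n k _) _.
  by rewrite lerDl mulr_ge0 ?divr_ge0 // ltW.
apply: sgd_rate_le; rewrite ?enorm_ge0 ?(ltW hK2) ?(leq_trans b_gt0) //.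
by rewrite le_max lexx.
Qed.
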